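(* Let $\boldsymbol H:\mathbb T^N\to\mathbb T^N$ satisfy Assumptions (H1) and (H2), let $N$ be sufficiently large, fix $i\in[1,N]$, let $\boldsymbol\Phi_i$ be the diffeomorphism described below, and define $G_i(y_i;\hat{\boldsymbol y}_i):=H_i(\boldsymbol\Phi_i(y_i;\hat{\boldsymbol y}_i))$. Then there is $\mathcal K_\#$ depending only on $E,\kappa,K$ such that $$d_{C^2}\big(G_i(\cdot;\hat{\boldsymbol x}_i),\,H_i(\cdot;\hat{\boldsymbol x}_i)\big)\le\mathcal K_\#N^{-1}\qquad\forall\hat{\boldsymbol x}_i\in\mathbb T^{N-1}.$$
   Context: $\mathbb T=\mathbb R/\mathbb Z$; derivatives via lifts; $d_{C^2}$ between circle maps is the max of sup-distances of lifts and of their first two derivatives. $\boldsymbol x=(x_i;\hat{\boldsymbol x}_i)$; $H_i$ is the $i$-th component of $\boldsymbol H$, $\hat{\boldsymbol H}_i$ the others. Assumption (H1), datum $(E,\kappa)$, $\kappa-E>1$: $\boldsymbol H\in C^1$, $|\partial_iH_i|>\kappa$, $|\partial_jH_i|<EN^{-1}$ for $j\ne i$. Assumption (H2), datum $(E,K)$: $\boldsymbol H\in C^3$, $|\partial_i^2H_i|\le K$, $|\partial_k\partial_jH_i|\le EN^{-1}$ if $j\ne i$ and $\le EN^{-2}$ if $i,j,k$ distinct, and for distinct $\ell,j,k$: $|\partial_\ell\partial_j^2H_j|\le EN^{-1}$, $|\partial_\ell\partial_k\partial_jH_j|\le EN^{-2}$. Under (H1), for $N$ large, there is a diffeomorphism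 $\boldsymbol\Phi_i:\mathbb T\times\mathbb T^{N-1}\to\mathbb T^N$ with $\Phi_{i,i}(y_i;\hat{\boldsymbol y}_i)=y_i$ and $\hat{\boldsymbol H}_i(\boldsymbol\Phi_i(y_i;\hat{\boldsymbol y}_i))=\hat{\boldsymbol H}_i(0;\hat{\boldsymbol y}_i)$, whose images of the circles $\mathbb T\times\{\hat{\boldsymbol y}_i\}$ are the connected components of the preimages $\boldsymbol H^{-1}(\{(x;\hat{\boldsymbol x}_i):x\in\mathbb T\})$, each homotopic to $\mathbb T\times\{\hat{\boldsymbol y}_i\}$; under (H2) it satisfies $|\partial_i\Phi_{i,m}|_\infty\le\mathcal K_\#N^{-1}$ for $m\ne i$. *)

(* Points of R^N (lifts of points of T^N) are row
   vectors 'rV[R]_N; maps T^N -> T^N are represented by their lifts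
   'rV[R]_N -> 'rV[R]_N. *)
From HB Require Import structures.
From mathcomp Require Import all_boot all_order all_algebra.
From mathcomp Require Import all_classical all_reals all_analysis.
Set Implicit Arguments. Unset Strict Implicit. Unset Printing Implicit Defensive.
Import Order.TTheory GRing.Theory Num.Theory.
Import numFieldNormedType.Exports.
Local Open Scope ring_scope.

Definition ev (R : realType) (N : nat) (j : 'I_N) : 'rV[R]_N :=
  \row_k (k == j)%:R.

(* the point (t ; \hat x_i): x with its i-th coordinate replaced by t *)
Definition setc (R : realType) (N : nat) (x : 'rV[R]_N) (i : 'I_N) (t : R)
  : 'rV[R]_N := \row_k (if k == i then t else x 0 k).

Definition cmpt (R : realType) (N : nat) (H : 'rV[R]_N -> 'rV[R]_N) (l : 'I_N)
  : 'rV[R]_N -> R := fun x => H x 0 l.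

Definition partial (R : realType) (N : nat) (f : 'rV[R]_N -> R) (j : 'I_N)
  : 'rV[R]_N -> R := fun x => derive f x (ev R j).

Fixpoint Ck (R : realType) (N : nat) (k : nat) (f : 'rV[R]_N -> R) : Prop :=
  continuous f /\
  match k with
  | 0 => True
  | k'.+1 => forall j : 'I_N,
      (forall x, derivable f x (ev R j)) /\ Ck k' (partial f j)
  end.

(* F : R^N -> R^N is the lift of a (continuous) map T^N -> T^N *)
Definition torus_lift (R : realType) (N : nat) (F : 'rV[R]_N -> 'rV[R]_N)
  : Prop :=
  (forall l, continuous (cmpt F l)) /\
  forall x (j l : 'I_N), F (x + ev R j) 0 l - F x 0 l \is a Num.int.

Definition H1 (R : realType) (N : nat) (E kappa : R)
  (H : 'rV[R]_N -> 'rV[R]_N) : Prop :=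
  torus_lift H /\
  (forall l, Ck 1 (cmpt H l)) /\
  (forall (i : 'I_N) x, kappa < `|partial (cmpt H i) i x|) /\
  (forall (i j : 'I_N) x, j != i ->
     `|partial (cmpt H i) j x| < E / N%:R).

Definition H2 (R : realType) (N : nat) (E K : R)
  (H : 'rV[R]_N -> 'rV[R]_N) : Prop :=
  torus_lift H /\
  (forall l, Ck 3 (cmpt H l)) /\
  (forall (i : 'I_N) x, `|partial (partial (cmpt H i) i) i x| <= K) /\
  (forall (i j k : 'I_N) x, j != i ->
     `|partial (partial (cmpt H i) j) k x| <= E / N%:R) /\
  (forall (i j k : 'I_N) x, i != j -> j != k -> i != k ->
     `|partial (partial (cmpt H i) j) k x| <= E / (N%:R ^+ 2)) /\
  (forall (l j k : 'I_N) x, l != j -> j != k -> l != k ->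
     `|partial (partial (partial (cmpt H j) j) j) l x| <= E / N%:R) /\
  (forall (l j k : 'I_N) x, l != j -> j != k -> l != k ->
     `|partial (partial (partial (cmpt H j) j) k) l x| <= E / (N%:R ^+ 2)).

(* Phi is (a lift of) the diffeomorphism Phi_i : T x T^{N-1} -> T^N described
   in the context; the point (y_i ; \hat y_i) is the vector y, with y_i = y 0 i.
   Lifts are normalized so that Phi_i (0 ; \hat y_i) = (0 ; \hat y_i). *)
Definition is_Phi (R : realType) (N : nat) (H : 'rV[R]_N -> 'rV[R]_N)
  (i : 'I_N) (Phi : 'rV[R]_N -> 'rV[R]_N) : Prop :=
  torus_lift Phi /\ (forall l, Ck 2 (cmpt Phi l)) /\
  (exists Psi : 'rV[R]_N -> 'rV[R]_N,
      torus_lift Psi /\ (forall l, Ck 1 (cmpt Psi l)) /\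
      cancel Phi Psi /\ cancel Psi Phi) /\
  (* the circles T x {\hat y_i} go to loops homotopic to T x {\hat y_i} *)
  (forall y, Phi (y + ev R i) = Phi y + ev R i) /\
  (forall y, Phi y 0 i = y 0 i) /\
  (forall y (l : 'I_N), l != i -> cmpt H l (Phi y) = cmpt H l (setc y i 0)) /\
  (forall y, Phi (setc y i 0) = setc y i 0).

Definition dC2_le (R : realType) (g h : R -> R) (c : R) : Prop :=
  forall t : R,
    `|g t - h t| <= c /\
    `|derive1n 1 g t - derive1n 1 h t| <= c /\
    `|derive1n 2 g t - derive1n 2 h t| <= c.

(* Along the curve gamma(t) = Phi_i(t ; x^_i) we have gamma_i(t) = t, while the
   components H_l o gamma, l <> i, are constant.  Differentiating them once and
   twice gives linear systems for gamma' and gamma'' whose rows l <> i are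
   diagonally dominant by (H1), so gamma_m' and gamma_m'' are O(1/N) for m <> i.
   As gamma_m (m <> i) is 1-periodic with gamma_m(0) = x_m, each such coordinate
   stays within E/N of x_m.  Expanding G_i = H_i o gamma and its first two
   derivatives by the chain rule, every term differs from the corresponding
   term for H_i(. ; x^_i) by O(1/N) thanks to the off-diagonal bounds of (H2).
   The bound on d_k d_i H_i needed there is obtained from the one on
   d_i d_k H_i through second difference quotients, without Schwarz's theorem. *)

From HB Require Import structures.
From mathcomp Require Import all_boot all_order all_algebra.
From mathcomp Require Import all_classical all_reals all_analysis.
From mathcomp Require Import ring lra zify.
Set Implicit Arguments. Unset Strict Implicit. Unset Printing Implicit Defensive.
Import Order.TTheory GRing.Theory Num.Theory Num.Def.
Import numFieldNormedType.Exports.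
Local Open Scope ring_scope.
Local Open Scope classical_set_scope.

Section CoordinateCalculus.
Variable R : realType.
Implicit Types (N : nat) (t s h : R).

Lemma is_derive_line N (f : 'rV[R]_N -> R) (y : 'rV[R]_N) (j : 'I_N) s :
  derivable f (y + s *: ev R j) (ev R j) ->
  is_derive s 1 (fun u : R => f (y + u *: ev R j)) (partial f j (y + s *: ev R j)).
Proof.
move=> df.
have quotE : (fun h : R => h^-1 *: (((fun u : R => f (y + u *: ev R j)) \o shift s) (h *: 1)
             - (fun u : R => f (y + u *: ev R j)) s)) =
         (fun h : R => h^-1 *: ((f \o shift (y + s *: ev R j)) (h *: ev R j)
             - f (y + s *: ev R j))).
  apply/funext => h /=; congr (_ *: (f _ - _)).
  by rewrite scaler1 scalerDl addrCA.
by split; rewrite /derivable /derive /partial quotE.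
Qed.

Lemma is_derive_unique (f : R -> R) t (a b : R) :
  is_derive t 1 f a -> is_derive t 1 f b -> a = b.
Proof. by case=> _ <-; case=> _ <-. Qed.

Lemma ler_dist_mvt (g : R -> R) (a b M : R) : (forall s, derivable g s 1) ->
  (forall s, Num.min a b <= s <= Num.max a b -> `|derive1 g s| <= M) ->
  `|g b - g a| <= M * `|b - a|.
Proof.
move=> dg.
wlog ab : a b / a <= b.
  move=> W Hb; case: (leP a b) => [ab|ba]; first exact: W.
  rewrite distrC (distrC b); apply: W; first exact: ltW.
  by move=> s hs; apply: Hb; rewrite minC maxC.
move=> Hb.
have dgP s : is_derive s 1 g (derive1 g s) by rewrite derive1E; exact: derivableP.
have [c cab ->] := MVT_segment ab (fun s _ => dgP s)
  (derivable_within_continuous (fun s _ => dg s)).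
rewrite normrM ler_wpM2r //; apply: Hb.
by move: cab; rewrite in_itv /= (min_l ab) (max_r ab).
Qed.

Definition row_mix N (y z : 'rV[R]_N) (k : nat) : 'rV[R]_N :=
  \row_m (if (m < k)%N then y 0 m else z 0 m).

Lemma row_mix0 N (y z : 'rV[R]_N) : row_mix y z 0 = z.
Proof. by apply/rowP => m; rewrite !mxE. Qed.

Lemma row_mixN N (y z : 'rV[R]_N) : row_mix y z N = y.
Proof. by apply/rowP => m; rewrite !mxE ltn_ord. Qed.

Lemma row_mixS N (y z : 'rV[R]_N) (k : 'I_N) :
  row_mix y z k.+1 = row_mix y z k + (y 0 k - z 0 k) *: ev R k.
Proof.
apply/rowP => m; rewrite !mxE ltnS leq_eqVlt.
case: (eqVneq m k) => [->|mk] /=; first by rewrite eqxx ltnn mulr1 addrC subrK.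
have -> : (nat_of_ord m == nat_of_ord k) = false by exact/negbTE.
by rewrite mulr0 addr0.
Qed.

Lemma telescope_row_mix N (f : 'rV[R]_N -> R) (y z : 'rV[R]_N) :
  f y - f z = \sum_(k < N) (f (row_mix y z k.+1) - f (row_mix y z k)).
Proof.
rewrite -(big_mkord xpredT (fun k => f (row_mix y z k.+1) - f (row_mix y z k))).
by rewrite telescope_sumr // row_mixN row_mix0.
Qed.

Lemma ler_dist_partial N (f : 'rV[R]_N -> R) (y z : 'rV[R]_N) (M : R) :
  (forall j x, derivable f x (ev R j)) ->
  (forall j x, y 0 j != z 0 j -> `|partial f j x| <= M) ->
  `|f y - f z| <= M * \sum_k `|y 0 k - z 0 k|.
Proof.
move=> df hM; rewrite telescope_row_mix mulr_sumr.
apply: le_trans (ler_norm_sum _ _ _) _; apply: ler_sum => k _.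
rewrite row_mixS; set w := row_mix y z k.
case: (eqVneq (y 0 k) (z 0 k)) => [->|ne].
  by rewrite subrr scale0r addr0 subrr normr0 mulr0.
have dline s : derivable (fun u : R => f (w + u *: ev R k)) s 1.
  by have [] := is_derive_line (df k (w + s *: ev R k)).
have := ler_dist_mvt (a := 0) (b := y 0 k - z 0 k) (M := M) dline.
rewrite scale0r addr0 subr0; apply => s _.
rewrite derive1E; have [_ ->] := is_derive_line (df k (w + s *: ev R k)).
exact: hM.
Qed.

Lemma cvg_is_derive (f : R -> R) t (L : R) :
  (fun h : R => h^-1 *: ((f \o shift t) (h *: 1) - f t)) @ 0^' --> L ->
  is_derive t 1 f L.
Proof. by move=> H; split; [apply/cvg_ex; exists L | exact: cvg_lim]. Qed.

Lemma normr_le_between0 (u D : R) :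
  Num.min 0 D <= u <= Num.max 0 D -> `|u| <= `|D|.
Proof.
case: (leP 0 D) => D0 /andP[a b]; first by rewrite (ger0_norm D0) ger0_norm.
by rewrite (ltr0_norm D0) ler0_norm // lerN2.
Qed.
Lemma ler_dist_linear_line N (f : 'rV[R]_N -> R) (w : 'rV[R]_N) (k : 'I_N)
    (c D e : R) :
  (forall x, derivable f x (ev R k)) ->
  (forall u, Num.min 0 D <= u <= Num.max 0 D ->
     `|partial f k (w + u *: ev R k) - c| <= e) ->
  `|f (w + D *: ev R k) - f w - c * D| <= e * `|D|.
Proof.
move=> df hc.
pose phi u := f (w + u *: ev R k) - c * u.
have dphi (u : R) : is_derive u 1 phi (partial f k (w + u *: ev R k) - c).
  have := is_deriveB (is_derive_line (df (w + u *: ev R k)))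
                     (is_deriveZ c (is_derive_id u (1 : R))).
  have -> : (fun u => f (w + u *: ev R k)) - c \*: id = phi.
    by apply/funext => v; rewrite /phi !fctE.
  by rewrite /GRing.scale /= mulr1.
have dphi' u : derivable phi u 1 by case: (dphi u).
have := ler_dist_mvt (a := 0) (b := D) (M := e) dphi'.
rewrite /phi scale0r addr0 mulr0 !subr0 addrAC; apply => u hu.
by rewrite derive1E; have [_ ->] := dphi u; exact: hc.
Qed.

Lemma ball_row N (x z : 'rV[R]_N) (d : R) : 0 < d ->
  (forall m, `|x 0 m - z 0 m| < d) -> ball x d z.
Proof. by move=> d0 H; split => // i j; rewrite (ord1 i); exact: H. Qed.

Lemma ball_row_mix_line N (y z : 'rV[R]_N) (k : 'I_N) (d u : R) :
  0 < d -> (forall m, `|y 0 m - z 0 m| < d) ->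
  Num.min 0 (y 0 k - z 0 k) <= u <= Num.max 0 (y 0 k - z 0 k) ->
  ball z d (row_mix y z k + u *: ev R k).
Proof.
move=> d0 yz hu; apply: ball_row => // m; rewrite !mxE; case: (eqVneq m k) => [->|mk].
  rewrite ltnn /= mulr1 opprD addrA subrr sub0r normrN.
  exact: le_lt_trans (normr_le_between0 hu) (yz k).
rewrite /= mulr0 addr0; case: ifP => _; last by rewrite subrr normr0.
by rewrite distrC; exact: yz.
Qed.

Lemma cvg_chain_rule_coordinate N (f : 'rV[R]_N -> R) (g : R -> 'rV[R]_N)
    (k : 'I_N) (dk t : R) :
  (forall x, derivable f x (ev R k)) -> continuous (partial f k) ->
  (forall m, (fun h => g (h + t) 0 m - g t 0 m) @ 0^' --> (0 : R)) ->
  (fun h => h^-1 * (g (h + t) 0 k - g t 0 k)) @ 0^' --> dk ->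
  (fun h => h^-1 * (f (row_mix (g (h + t)) (g t) k.+1)
                    - f (row_mix (g (h + t)) (g t) k)))
    @ 0^' --> partial f k (g t) * dk.
Proof.
move=> df cf gc hq; set c := partial f k (g t).
apply: (@cvg_sub0 _ _ _ _ _ _ (fun h => c * (h^-1 * (g (h + t) 0 k - g t 0 k))));
  last exact: cvgMl_tmp.
apply/cvgr0Pnorm_le => e e0.
set e' := e / (`|dk| + 1).
have dk1 : 0 < `|dk| + 1 by rewrite ltr_wpDl.
have e'0 : 0 < e' by rewrite divr_gt0.
have [d d0 near_c] : exists2 d, 0 < d &
    forall z, ball (g t) d z -> `|partial f k z - c| <= e'.
  have /cvgrPdist_le/(_ e' e'0)/nbhs_ballP[d d0 Hd] := cf (g t).
  by exists d => // z /Hd; rewrite distrC.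
have near_g : \forall h \near 0^', forall m, `|g (h + t) 0 m - g t 0 m| < d.
  by apply: filter_forall => m; have /cvgr0Pnorm_lt := gc m; exact.
have near_dk := (iffLR (cvgrPdist_le _ _) hq) 1 ltr01.
near=> h.
have h0 : h != 0 by near: h; exact: nbhs_dnbhs_neq.
have gh : forall m, `|g (h + t) 0 m - g t 0 m| < d by near: h.
have qh : `|dk - h^-1 * (g (h + t) 0 k - g t 0 k)| <= 1 by near: h; exact: near_dk.
rewrite !fctE /= row_mixS.
set D := g (h + t) 0 k - g t 0 k; set w := row_mix (g (h + t)) (g t) k.
have lin : `|f (w + D *: ev R k) - f w - c * D| <= e' * `|D|.
  by apply: ler_dist_linear_line => // u hu; apply/near_c/ball_row_mix_line.
have qdk : `|h^-1 * D| <= `|dk| + 1.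
  rewrite -[h^-1 * D](subKr dk); apply: le_trans (ler_normB _ _) _.
  by rewrite lerD.
rewrite mulrCA -mulrBr normrM.
apply: le_trans (ler_wpM2l (normr_ge0 _) lin) _.
rewrite mulrCA -normrM; apply: le_trans (ler_wpM2l (ltW e'0) qdk) _.
by rewrite /e' divfK // gt_eqF.
Unshelve. all: by end_near.
Qed.

Lemma is_derive_comp_row N (f : 'rV[R]_N -> R) (g : R -> 'rV[R]_N)
    (d : 'I_N -> R) t :
  (forall j x, derivable f x (ev R j)) -> (forall j, continuous (partial f j)) ->
  (forall m, is_derive t 1 (fun s => g s 0 m) (d m)) ->
  is_derive t 1 (f \o g) (\sum_m partial f m (g t) * d m).
Proof.
move=> df cf dg.
have quot m : (fun h => h^-1 * (g (h + t) 0 m - g t 0 m)) @ 0^' --> d m.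
  have [+ <-] := dg m; rewrite /derivable.
  suff -> : (fun h => h^-1 * (g (h + t) 0 m - g t 0 m)) =
    (fun h => h^-1 *: (((fun s => g s 0 m) \o shift t) (h *: 1) - g t 0 m)) by [].
  by apply/funext => h /=; rewrite /GRing.scale /= mulr1.
have gc m : (fun h => g (h + t) 0 m - g t 0 m) @ 0^' --> (0 : R).
  rewrite -[X in _ --> X](mul0r (d m)).
  apply: cvg_trans _ (cvgM (cvg_within_filter _ cvg_id) (quot m)).
  apply: near_eq_cvg; near=> h.
  have h0 : h != 0 by near: h; exact: nbhs_dnbhs_neq.
  by rewrite /= mulrA mulfV ?mul1r.
apply: cvg_is_derive.
have -> : (fun h => h^-1 *: (((f \o g) \o shift t) (h *: 1) - (f \o g) t)) =
  (fun h => \sum_(k < N) h^-1 * (f (row_mix (g (h + t)) (g t) k.+1)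
                                 - f (row_mix (g (h + t)) (g t) k))).
  by apply/funext => h /=; rewrite -mulr_sumr -telescope_row_mix /GRing.scale /= mulr1.
apply: cvg_big => //; first exact: add_continuous.
by move=> k _; apply: cvg_chain_rule_coordinate.
Unshelve. all: by end_near.
Qed.

Lemma norm_lim_le (phi : R -> R) (l c : R) : phi @ 0^' --> l ->
  (forall h, h != 0 -> `|phi h| <= c) -> `|l| <= c.
Proof.
move=> phil hb; apply/ler_addgt0Pr => e e0.
near (0 : R)^' => h.
have h0 : h != 0 by near: h; exact: nbhs_dnbhs_neq.
have lh : `|l - phi h| < e by near: h; exact: (iffLR (cvgrPdist_lt _ _) phil).
rewrite -[l](subrK (phi h)); apply: le_trans (ler_normD _ _) _.
by rewrite addrC lerD // ?hb // ltW.
Unshelve. all: by end_near.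
Qed.

Lemma cvg_partial N (f : 'rV[R]_N -> R) (u : 'I_N) (y : 'rV[R]_N) :
  derivable f y (ev R u) ->
  (fun h => h^-1 * (f (y + h *: ev R u) - f y)) @ 0^' --> partial f u y.
Proof.
move=> d; rewrite /partial /derive.
suff -> : (fun h => h^-1 * (f (y + h *: ev R u) - f y)) =
  (fun h => h^-1 *: ((f \o shift y) (h *: ev R u) - f y)) by exact: d.
by apply/funext => h /=; rewrite [y + _]addrC.
Qed.

Section TwoDirections.
Local Unset Implicit Arguments.
Variables (N : nat) (f : 'rV[R]_N -> R) (u v : 'I_N) (M : R).
Hypotheses (du : forall x, derivable f x (ev R u))
  (dv : forall x, derivable f x (ev R v))
  (dvu : forall x, derivable (partial f v) x (ev R u))
  (bound_vu : forall x, `|partial (partial f v) u x| <= M).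

Lemma ler_second_difference (x : 'rV[R]_N) (h w : R) :
  `|f (x + w *: ev R v + h *: ev R u) - f (x + w *: ev R v)
    - (f (x + h *: ev R u) - f x)| <= M * `|h| * `|w|.
Proof.
pose g s := f (x + s *: ev R v + h *: ev R u) - f (x + s *: ev R v).
have dg (s : R) : is_derive s 1 g
    (partial f v (x + h *: ev R u + s *: ev R v) - partial f v (x + s *: ev R v)).
  have l1 := is_derive_line (dv (x + h *: ev R u + s *: ev R v)).
  have l2 := is_derive_line (dv (x + s *: ev R v)).
  have := is_deriveB l1 l2.
  suff -> : (fun s => f (x + h *: ev R u + s *: ev R v))
            - (fun s => f (x + s *: ev R v)) = g by [].
  by apply/funext => s'; rewrite /g !fctE [x + h *: _ + _]addrAC.
have dg' s : derivable g s 1 by case: (dg s).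
have := ler_dist_mvt (a := 0) (b := w) (M := M * `|h|) dg'.
rewrite /g !scale0r !addr0 subr0; apply => s _.
rewrite derive1E; have [_ ->] := dg s.
have dline (r : R) : derivable (fun r : R => partial f v (x + s *: ev R v + r *: ev R u)) r 1.
  by have [] := is_derive_line (dvu (x + s *: ev R v + r *: ev R u)).
have := ler_dist_mvt (a := 0) (b := h) (M := M) dline.
rewrite scale0r addr0 subr0 [x + h *: _ + _]addrAC; apply => r _.
by rewrite derive1E; have [_ ->] := is_derive_line (dvu (x + s *: ev R v + r *: ev R u)).
Qed.

Lemma ler_dist_partial_shift (x : 'rV[R]_N) (w : R) :
  `|partial f u (x + w *: ev R v) - partial f u x| <= M * `|w|.
Proof.
have quot_cvg : (fun h => h^-1 * (f (x + w *: ev R v + h *: ev R u) - f (x + w *: ev R v))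
    - h^-1 * (f (x + h *: ev R u) - f x)) @ 0^'
    --> partial f u (x + w *: ev R v) - partial f u x.
  by apply: cvgB; apply: cvg_partial.
apply: (norm_lim_le quot_cvg) => h h0.
rewrite -mulrBr normrM normfV; apply: le_trans (ler_wpM2l _ (ler_second_difference x h w)) _.
  by rewrite invr_ge0.
by rewrite (mulrC M) -mulrA mulKf // normr_eq0.
Qed.

(* Both mixed partials are limits of the same second difference quotients. *)
Lemma partial_swap_le (duv : forall x, derivable (partial f u) x (ev R v)) x :
  `|partial (partial f u) v x| <= M.
Proof.
apply: (norm_lim_le (cvg_partial (duv x))) => h h0.
rewrite normrM normfV; apply: le_trans (ler_wpM2l _ (ler_dist_partial_shift x h)) _.
  by rewrite invr_ge0.
by rewrite mulrCA mulVf ?mulr1 // normr_eq0.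
Qed.
End TwoDirections.
End CoordinateCalculus.

Section DiagonalDominance.
Variable R : realType.

Lemma sum_delta N (i : 'I_N) (c : R) : \sum_(m < N) ((m == i)%:R * c) = c.
Proof.
by rewrite (bigD1 i) //= eqxx mul1r big1 ?addr0 // => m /negbTE ->; rewrite mul0r.
Qed.

Lemma sum_const_ord N (c : R) : \sum_(m < N) c = N%:R * c.
Proof. by rewrite sumr_const card_ord mulr_natl. Qed.

Lemma ler_norm_sum_delta N (i : 'I_N) (F : 'I_N -> R) (al be : R) :
  (forall m, `|F m| <= (m == i)%:R * al + be) -> `|\sum_m F m| <= al + N%:R * be.
Proof.
move=> hF; apply: le_trans (ler_norm_sum _ _ _) _.
apply: le_trans (ler_sum _ (fun m _ => hF m)) _.
by rewrite big_split /= sum_delta sum_const_ord.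
Qed.

(* Compare the row of the largest [|a l|], [l != i], with its diagonal. *)
Lemma diag_dominant_le N (i : 'I_N) (p : 'I_N -> 'I_N -> R) (a r : 'I_N -> R)
    (e kap rho : R) :
  0 <= e -> 0 <= rho -> 1 < kap - e * N%:R ->
  (forall l, l != i -> kap <= `|p l l|) ->
  (forall l m, l != i -> m != l -> `|p l m| <= e) ->
  (forall l, l != i -> \sum_m p l m * a m = r l) ->
  (forall l, l != i -> `|r l| <= rho) ->
  forall l, l != i -> `|a l| <= rho + e * `|a i|.
Proof.
move=> e0 rho0 dom hdiag hoff hsys hr.
set A := \big[maxr/0]_(m | m != i) `|a m|.
have A0 : 0 <= A by rewrite /A bigmax_idl le_max lexx.
have aA m : m != i -> `|a m| <= A by move=> hm; exact: le_bigmax_cond.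
have eN0 : 0 <= e * N%:R by rewrite mulr_ge0.
have kap0 : 0 < kap by lra.
have row_le l : l != i -> kap * `|a l| <= rho + e * `|a i| + e * N%:R * A.
  move=> hl; apply: le_trans (_ : kap * `|a l| <= `|p l l * a l|) _.
    by rewrite normrM ler_wpM2r // hdiag.
  have -> : p l l * a l = r l - \sum_(m < N | m != l) p l m * a m.
    by rewrite -(hsys l hl) (bigD1 l) //= addrK.
  apply: le_trans (ler_normB _ _) _; rewrite -addrA lerD ?hr //.
  apply: le_trans (ler_norm_sum _ _ _) _.
  apply: le_trans (_ : _ <= \sum_(m < N | m != l) e * ((m == i)%:R * `|a i| + A)) _.
    apply: ler_sum => m hm; rewrite normrM; apply: ler_pM => //; first exact: hoff.
    case: (eqVneq m i) => [->|hmi]; first by rewrite mul1r lerDl.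
    by rewrite mul0r add0r aA.
  apply: le_trans (_ : _ <= \sum_(m < N) e * ((m == i)%:R * `|a i| + A)) _.
    rewrite [X in _ <= X](bigID (fun m => m != l)) /= lerDl.
    by apply: sumr_ge0 => m _; rewrite mulr_ge0 // addr_ge0 // mulr_ge0.
  by rewrite -mulr_sumr big_split /= sum_delta sum_const_ord mulrDr mulrA.
have : A <= (rho + e * `|a i| + e * N%:R * A) / kap.
  apply: bigmax_le => [|l hl]; last by rewrite ler_pdivlMr // mulrC row_le.
  by apply: divr_ge0 (ltW kap0); rewrite !addr_ge0 ?mulr_ge0.
rewrite ler_pdivlMr // mulrC => hA l hl.
by apply: le_trans (aA l hl) _; nra.
Qed.
End DiagonalDominance.

Section Periodic.
Variable R : realType.

Lemma periodic_int_shift (u : R -> R) : (forall s, u (s + 1) = u s) ->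
  forall (z : int) s, u (s + z%:~R) = u s.
Proof.
move=> hp.
have shift_nat (n : nat) s : u (s + n%:R) = u s.
  by elim: n s => [|n IH] s; rewrite ?addr0 // -natr1 addrA hp IH.
case=> n s; first exact: shift_nat.
by rewrite NegzE mulrNz -(shift_nat n.+1 (s - n.+1%:R)) subrK.
Qed.

Lemma periodic_dist_le (u : R -> R) (A : R) : (forall s, derivable u s 1) ->
  (forall s, `|derive1 u s| <= A) -> (forall s, u (s + 1) = u s) ->
  forall t, `|u t - u 0| <= A.
Proof.
move=> du hA hp t.
have A0 : 0 <= A := le_trans (normr_ge0 _) (hA 0).
set z := Num.floor t; set t' := t - z%:~R.
have -> : u t = u t' by rewrite -(periodic_int_shift hp z t') subrK.
have t'0 : 0 <= t' by rewrite /t' subr_ge0 floor_le.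
have t'1 : t' < 1 by rewrite /t' ltrBlDl; have := floorD1_gt t; rewrite intrD.
apply: le_trans (ler_dist_mvt (a := 0) (b := t') (M := A) du (fun s _ => hA s)) _.
by rewrite subr0 ger0_norm // ler_piMr // ltW.
Qed.
End Periodic.

Section CkProjections.
Variables (R : realType) (N : nat).

Lemma Ck_continuous k (f : 'rV[R]_N -> R) : Ck k f -> continuous f.
Proof. by case: k => [[]|k []]. Qed.

Lemma Ck_derivable k (f : 'rV[R]_N -> R) :
  Ck k.+1 f -> forall j x, derivable f x (ev R j).
Proof. by move=> [_ h] j; case: (h j). Qed.

Lemma Ck_partial k (f : 'rV[R]_N -> R) : Ck k.+1 f -> forall j, Ck k (partial f j).
Proof. by move=> [_ h] j; case: (h j). Qed.
End CkProjections.
Arguments Ck_derivable {R N k f} _ j x.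
Arguments Ck_partial {R N k f} _ j.

Section Straightening.
Variables (R : realType) (E kappa K : R) (N : nat) (H Phi : 'rV[R]_N -> 'rV[R]_N)
  (i : 'I_N) (x : 'rV[R]_N).
Hypotheses (kappa_gt : 1 < kappa - E) (N_ge3 : (3 <= N)%N)
  (hH1 : H1 E kappa H) (hH2 : H2 E K H) (hPhi : is_Phi H i Phi).
Implicit Types (t s : R) (l m k : 'I_N).

Definition gamma (t : R) := Phi (setc x i t).
Definition dgamma (m : 'I_N) (t : R) := partial (cmpt Phi m) i (setc x i t).
Definition ddgamma (m : 'I_N) (t : R) :=
  partial (partial (cmpt Phi m) i) i (setc x i t).
Definition DH (l m : 'I_N) (t : R) := partial (cmpt H l) m (gamma t).
Definition DDH (l m k : 'I_N) (t : R) := partial (partial (cmpt H l) m) k (gamma t).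
Definition eps := E / N%:R.

Lemma setc_line t : setc x i t = setc x i 0 + t *: ev R i.
Proof.
by apply/rowP => m; rewrite !mxE; case: (m == i); rewrite ?add0r ?mulr1 ?mulr0 ?addr0.
Qed.

Lemma Ck_Phi l : Ck 2 (cmpt Phi l).
Proof. by case: hPhi => _ []. Qed.

Lemma Ck_H l : Ck 3 (cmpt H l).
Proof. by case: hH2 => _ []. Qed.

Lemma is_derive_setc (f : 'rV[R]_N -> R) t : (forall y, derivable f y (ev R i)) ->
  is_derive t 1 (fun s => f (setc x i s)) (partial f i (setc x i t)).
Proof.
move=> df; have := is_derive_line (df (setc x i 0 + t *: ev R i)).
by rewrite -setc_line; under eq_fun do rewrite -setc_line.
Qed.

Lemma is_derive_gamma m t : is_derive t 1 (fun s => gamma s 0 m) (dgamma m t).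
Proof. exact: is_derive_setc (Ck_derivable (Ck_Phi m) i). Qed.

Lemma is_derive_dgamma m t : is_derive t 1 (dgamma m) (ddgamma m t).
Proof. exact: is_derive_setc (Ck_derivable (Ck_partial (Ck_Phi m) i) i). Qed.

Lemma gamma_i s : gamma s 0 i = s.
Proof. by case: hPhi => _ [_ [_ [_ [Phi_i _]]]]; rewrite /gamma Phi_i !mxE eqxx. Qed.

Lemma dgamma_i t : dgamma i t = 1.
Proof.
have := is_derive_gamma i t; under eq_fun do rewrite gamma_i.
by move/is_derive_unique; apply; exact: is_derive_id.
Qed.

Lemma ddgamma_i t : ddgamma i t = 0.
Proof.
have := is_derive_dgamma i t.
have -> : dgamma i = cst 1 by apply/funext => s; rewrite dgamma_i.
by move/is_derive_unique; apply; exact: is_derive_cst.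
Qed.

Lemma is_derive_H_gamma l t :
  is_derive t 1 (fun s => cmpt H l (gamma s)) (\sum_m DH l m t * dgamma m t).
Proof.
apply: (@is_derive_comp_row R N (cmpt H l) gamma (dgamma^~ t)).
- exact: Ck_derivable (Ck_H l).
- by move=> j; exact: Ck_continuous (Ck_partial (Ck_H l) j).
- by move=> j; exact: is_derive_gamma.
Qed.

Lemma is_derive_DH l m t :
  is_derive t 1 (DH l m) (\sum_k DDH l m k t * dgamma k t).
Proof.
apply: (@is_derive_comp_row R N (partial (cmpt H l) m) gamma (dgamma^~ t)).
- exact: Ck_derivable (Ck_partial (Ck_H l) m).
- by move=> j; exact: Ck_continuous (Ck_partial (Ck_partial (Ck_H l) m) j).
- by move=> j; exact: is_derive_gamma.
Qed.

Lemma is_derive_dH_gamma l t :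
  is_derive t 1 (fun s => \sum_m DH l m s * dgamma m s)
    (\sum_m (DH l m t * ddgamma m t + dgamma m t * \sum_k DDH l m k t * dgamma k t)).
Proof.
have := @is_derive_sum _ _ _ N (fun m => DH l m * dgamma m) t 1.
rewrite fct_sumE; apply => m.
exact: is_deriveM (is_derive_DH l m t) (is_derive_dgamma m t).
Qed.

Lemma H_gamma_const l : l != i ->
  (fun s => cmpt H l (gamma s)) = cst (cmpt H l (setc x i 0)).
Proof.
move=> li; apply/funext => s; case: hPhi => _ [_ [_ [_ [_ [Hhat _]]]]].
rewrite /gamma Hhat //; congr (cmpt H l _).
by apply/rowP => m; rewrite !mxE; case: (m == i).
Qed.

Lemma first_variation l t : l != i -> \sum_m DH l m t * dgamma m t = 0.
Proof.
move=> li; have := is_derive_H_gamma l t; rewrite H_gamma_const //.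
by move/is_derive_unique; apply; exact: is_derive_cst.
Qed.

Lemma second_variation l t : l != i ->
  \sum_m (DH l m t * ddgamma m t + dgamma m t * \sum_k DDH l m k t * dgamma k t) = 0.
Proof.
move=> li; have := is_derive_dH_gamma l t.
have -> : (fun s => \sum_m DH l m s * dgamma m s) = cst 0.
  by apply/funext => s; rewrite first_variation.
by move/is_derive_unique; apply; exact: is_derive_cst.
Qed.

Lemma exists_ord_neq2 (u v : 'I_N) : exists w : 'I_N, (w != u) && (w != v).
Proof.
have [k k3 hk] : exists2 k, (k < 3)%N & (k != u :> nat) && (k != v :> nat).
  case E0: ((0 != u :> nat) && (0 != v :> nat)); first by exists 0%N.
  case E1: ((1 != u :> nat) && (1 != v :> nat)); first by exists 1%N.
  by exists 2%N => //; move/negbT: E0; move/negbT: E1; lia.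
by exists (Ordinal (leq_trans k3 N_ge3)).
Qed.

Lemma N_gt0 : 0 < N%:R :> R.
Proof. by rewrite ltr0n; lia. Qed.

Lemma E_gt0 : 0 < E.
Proof.
have [w /andP[wi _]] := exists_ord_neq2 i i.
case: hH1 => _ [_ [_ offdiag]]; have := le_lt_trans (normr_ge0 _) (offdiag i w x wi).
by rewrite pmulr_lgt0 // invr_gt0 N_gt0.
Qed.

Lemma eps_gt0 : 0 < eps.
Proof. by rewrite divr_gt0 ?E_gt0 ?N_gt0. Qed.

Lemma eps_N : eps * N%:R = E.
Proof. by rewrite divfK // gt_eqF // N_gt0. Qed.

Lemma K_ge0 : 0 <= K.
Proof. by case: hH2 => _ [_ [diag _]]; exact: le_trans (normr_ge0 _) (diag i x). Qed.

Lemma DH_offdiag_le l m t : m != l -> `|DH l m t| <= eps.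
Proof. by move=> ml; case: hH1 => _ [_ [_ offdiag]]; exact/ltW/offdiag. Qed.

Lemma DH_diag_ge l t : kappa <= `|DH l l t|.
Proof. by case: hH1 => _ [_ [diag _]]; exact/ltW/diag. Qed.

Lemma partial2_diag_swap_le l k y : k != l ->
  `|partial (partial (cmpt H l) l) k y| <= eps.
Proof.
move=> kl; apply: (@partial_swap_le R N (cmpt H l) l k eps).
- exact: Ck_derivable (Ck_H l) l.
- exact: Ck_derivable (Ck_H l) k.
- exact: Ck_derivable (Ck_partial (Ck_H l) k) l.
- by move=> z; case: hH2 => _ [_ [_ [offdiag _]]]; exact: offdiag.
- exact: Ck_derivable (Ck_partial (Ck_H l) l) k.
Qed.

Lemma DDH_le l m k t : `|DDH l m k t| <= eps + K * (m == l)%:R.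
Proof.
have e0 := eps_gt0; have K0 := K_ge0.
case: (eqVneq m l) => [->|ml]; last first.
  by rewrite mulr0 addr0; case: hH2 => _ [_ [_ [offdiag _]]]; exact: offdiag.
rewrite mulr1; case: (eqVneq k l) => [->|kl].
  by case: hH2 => _ [_ [diag _]]; apply: le_trans (diag l _) _; rewrite lerDr ltW.
by apply: le_trans (partial2_diag_swap_le _ kl) _; rewrite lerDl.
Qed.

Lemma dgamma_offdiag_le t l : l != i -> `|dgamma l t| <= eps.
Proof.
move=> li.
have := @diag_dominant_le R N i (fun l m => DH l m t) (dgamma^~ t) (fun _ => 0) eps kappa 0
  (ltW eps_gt0) (lexx 0) _ _ _ _ _ l li.
rewrite dgamma_i normr1 mulr1 add0r; apply.
- by rewrite eps_N.
- by move=> l' _; exact: DH_diag_ge.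
- by move=> l' m _; exact: DH_offdiag_le.
- by move=> l'; exact: first_variation.
- by move=> l' _; rewrite normr0.
Qed.

Lemma dgamma_le t m : `|dgamma m t| <= (m == i)%:R * 1 + eps.
Proof.
case: (eqVneq m i) => [->|mi]; last by rewrite mul0r add0r dgamma_offdiag_le.
by rewrite dgamma_i normr1 mulr1 lerDl ltW // eps_gt0.
Qed.

Lemma sum_dgamma_le t : \sum_m `|dgamma m t| <= 1 + E.
Proof.
apply: le_trans (ler_sum _ (fun m _ => dgamma_le t m)) _.
by rewrite big_split /= sum_delta sum_const_ord mulrC eps_N.
Qed.

Lemma sum_DDH_dgamma_le l m t :
  `|\sum_k DDH l m k t * dgamma k t| <= (eps + K * (m == l)%:R) * (1 + E).
Proof.
apply: le_trans (ler_norm_sum _ _ _) _.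
apply: le_trans (_ : _ <= \sum_k (eps + K * (m == l)%:R) * `|dgamma k t|) _.
  by apply: ler_sum => k _; rewrite normrM ler_wpM2r // DDH_le.
rewrite -mulr_sumr ler_wpM2l ?sum_dgamma_le //.
by apply: addr_ge0; [exact: ltW eps_gt0 | exact: mulr_ge0 K_ge0 (ler0n _ _)].
Qed.

Lemma ddgamma_offdiag_le t l : l != i ->
  `|ddgamma l t| <= eps * ((1 + E) * (1 + E + K)).
Proof.
move=> li; have e0 := eps_gt0; have K0 := K_ge0; have E0 := E_gt0.
have := @diag_dominant_le R N i (fun l m => DH l m t) (ddgamma^~ t)
  (fun l => - \sum_m dgamma m t * \sum_k DDH l m k t * dgamma k t) eps kappa
  (eps * ((1 + E) * (1 + E + K))) (ltW e0) _ _ _ _ _ _ l li.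
rewrite ddgamma_i normr0 mulr0 addr0; apply.
- by rewrite !mulr_ge0 // ?addr_ge0 // ltW.
- by rewrite eps_N.
- by move=> l' _; exact: DH_diag_ge.
- by move=> l' m _; exact: DH_offdiag_le.
- move=> l' hl; apply/eqP; rewrite -addr_eq0 -big_split /=; apply/eqP.
  exact: second_variation.
- move=> l' hl; rewrite normrN.
  apply: le_trans (ler_norm_sum _ _ _) _.
  apply: le_trans (_ : _ <= \sum_m (1 + E) *
      ((m == i)%:R * eps + eps * eps + (m == l')%:R * (eps * K))) _.
    apply: ler_sum => m _; rewrite normrM.
    apply: le_trans (ler_pM (normr_ge0 _) (normr_ge0 _) (dgamma_le t m)
                            (sum_DDH_dgamma_le l' m t)) _.
    case: (eqVneq m i) => [->|mi]; first by rewrite eq_sym (negbTE hl) /=; lra.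
    by case: (m == l') => /=; lra.
  rewrite -mulr_sumr !big_split /= !sum_delta sum_const_ord.
  by rewrite mulrA [N%:R * _]mulrC eps_N; lra.
Qed.

Lemma gamma_dist_le t m : m != i -> `|gamma t 0 m - x 0 m| <= eps.
Proof.
move=> mi; case: hPhi => _ [_ [_ [Phi_per [_ [_ Phi_norm]]]]].
have <- : gamma 0 0 m = x 0 m by rewrite /gamma Phi_norm !mxE (negbTE mi).
apply: (periodic_dist_le (u := fun s => gamma s 0 m)).
- by move=> s; case: (is_derive_gamma m s).
- move=> s; rewrite derive1E; have [_ ->] := is_derive_gamma m s.
  exact: dgamma_offdiag_le.
- move=> s /=; rewrite /gamma; have -> : setc x i (s + 1) = setc x i s + ev R i.
    by apply/rowP => k; rewrite !mxE; case: (k == i); rewrite ?addr0.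
  by rewrite Phi_per !mxE (negbTE mi) addr0.
Qed.

Lemma sum_dist_gamma_le t : \sum_m `|gamma t 0 m - setc x i t 0 m| <= E.
Proof.
rewrite -eps_N mulrC -sum_const_ord; apply: ler_sum => m _.
rewrite !mxE; case: (eqVneq m i) => [->|mi]; last exact: gamma_dist_le.
by rewrite gamma_i subrr normr0 ltW // eps_gt0.
Qed.

Lemma gamma_neq_setc t j : gamma t 0 j != setc x i t 0 j -> j != i.
Proof. by apply: contra => /eqP ->; rewrite gamma_i !mxE eqxx. Qed.

Lemma ler_dist_gamma_setc (f : 'rV[R]_N -> R) t :
  (forall j y, derivable f y (ev R j)) ->
  (forall j y, j != i -> `|partial f j y| <= eps) ->
  `|f (gamma t) - f (setc x i t)| <= eps * E.
Proof.
move=> df hf; apply: le_trans (ler_dist_partial (M := eps) df _) _.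
  by move=> j y /gamma_neq_setc; exact: hf.
by rewrite ler_wpM2l ?sum_dist_gamma_le // ltW // eps_gt0.
Qed.

Lemma ler_dist_sum_dgamma (F : 'I_N -> R) (c : R) t :
  `|F i - c| <= eps * E -> (forall m, m != i -> `|F m| <= eps) ->
  `|\sum_m F m * dgamma m t - c| <= eps * (2 * E).
Proof.
move=> Fi Fm; rewrite -[c](sum_delta i) -sumrB.
have -> : eps * (2 * E) = eps * E + N%:R * (eps * eps).
  by rewrite [N%:R * (eps * eps)]mulrA [N%:R * eps]mulrC eps_N; ring.
apply: (ler_norm_sum_delta (i := i)) => m; case: (eqVneq m i) => [->|mi].
  by rewrite dgamma_i !mul1r mulr1 (le_trans Fi) // lerDl mulr_ge0 // ltW // eps_gt0.
by rewrite !mul0r subr0 add0r normrM ler_pM // ?Fm ?dgamma_offdiag_le.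
Qed.

Definition Gx t := cmpt H i (Phi (setc x i t)).
Definition Hx t := cmpt H i (setc x i t).

Lemma derive1_Gx : derive1n 1 Gx = fun t => \sum_m DH i m t * dgamma m t.
Proof.
by rewrite derive1n1; apply/funext => t; rewrite derive1E; have [_ ->] := is_derive_H_gamma i t.
Qed.

Lemma derive2_Gx : derive1n 2 Gx = fun t =>
  \sum_m (DH i m t * ddgamma m t + dgamma m t * \sum_k DDH i m k t * dgamma k t).
Proof.
rewrite derive1nS derive1_Gx; apply/funext => t; rewrite derive1E.
by have [_ ->] := is_derive_dH_gamma i t.
Qed.

Lemma derive1_Hx : derive1n 1 Hx = fun t => partial (cmpt H i) i (setc x i t).
Proof.
rewrite derive1n1; apply/funext => t; rewrite derive1E.
by have [_ ->] := is_derive_setc t (Ck_derivable (Ck_H i) i).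
Qed.

Lemma derive2_Hx :
  derive1n 2 Hx = fun t => partial (partial (cmpt H i) i) i (setc x i t).
Proof.
rewrite derive1nS derive1_Hx; apply/funext => t; rewrite derive1E.
by have [_ ->] := is_derive_setc t (Ck_derivable (Ck_partial (Ck_H i) i) i).
Qed.

Lemma dist_Gx_Hx t : `|Gx t - Hx t| <= eps * E.
Proof.
apply: ler_dist_gamma_setc; first exact: Ck_derivable (Ck_H i).
by move=> j y ji; case: hH1 => _ [_ [_ offdiag]]; exact/ltW/offdiag.
Qed.

Lemma dist_derive1 t : `|derive1n 1 Gx t - derive1n 1 Hx t| <= eps * (2 * E).
Proof.
rewrite derive1_Gx derive1_Hx; apply: ler_dist_sum_dgamma => [|m mi].
  apply: ler_dist_gamma_setc; first exact: Ck_derivable (Ck_partial (Ck_H i) i).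
  by move=> j y ji; exact: partial2_diag_swap_le.
exact: DH_offdiag_le.
Qed.

Lemma dist_derive2 t : `|derive1n 2 Gx t - derive1n 2 Hx t| <=
  eps * (2 * E) + N%:R * (eps * (eps * ((1 + E) * (1 + E + K))) + eps * (eps * (1 + E))).
Proof.
have e0 := eps_gt0; have E0 := E_gt0; have K0 := K_ge0.
rewrite derive2_Gx derive2_Hx /= -[X in _ - X](sum_delta i) -sumrB.
apply: (ler_norm_sum_delta (i := i)) => m; case: (eqVneq m i) => [->|mi].
  rewrite ddgamma_i dgamma_i mulr0 add0r !mul1r.
  apply: le_trans (_ : _ <= eps * (2 * E)) _; last first.
    by rewrite lerDl !(mulr_ge0, addr_ge0) // ltW.
  apply: ler_dist_sum_dgamma => [|k ki].
    apply: ler_dist_gamma_setc.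
      exact: Ck_derivable (Ck_partial (Ck_partial (Ck_H i) i) i).
    move=> j y ji; have [w /andP[wj wi]] := exists_ord_neq2 j i.
    case: hH2 => _ [_ [_ [_ [_ [third _]]]]].
    by apply: (third j i w y) => //; rewrite eq_sym.
  exact: partial2_diag_swap_le.
rewrite !mul0r subr0 add0r; apply: le_trans (ler_normD _ _) _.
rewrite !normrM lerD // ler_pM //.
- exact: DH_offdiag_le.
- exact: ddgamma_offdiag_le.
- exact: dgamma_offdiag_le.
- by have := sum_DDH_dgamma_le i m t; rewrite (negbTE mi) mulr0 addr0.
Qed.

Definition straightening_const := 2 * E + E * ((1 + E) * (1 + E + K)) + E * (1 + E).

Lemma dC2_Gx_Hx : dC2_le Gx Hx (E * straightening_const / N%:R).
Proof.
have e0 := eps_gt0; have E0 := E_gt0; have K0 := K_ge0.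
have -> : E * straightening_const / N%:R = eps * straightening_const by rewrite mulrAC.
have c0 : 0 <= E * ((1 + E) * (1 + E + K)) + E * (1 + E).
  by rewrite !(addr_ge0, mulr_ge0) // ltW.
have le_2E : eps * (2 * E) <= eps * straightening_const.
  by apply: ler_wpM2l; [exact: ltW | rewrite /straightening_const; lra].
move=> t; split; [|split].
- apply: le_trans (dist_Gx_Hx t) (le_trans _ le_2E).
  by apply: ler_wpM2l; [exact: ltW | lra].
- exact: le_trans (dist_derive1 t) le_2E.
- apply: le_trans (dist_derive2 t) _.
  have -> : N%:R * (eps * (eps * ((1 + E) * (1 + E + K))) + eps * (eps * (1 + E))) =
      eps * (eps * N%:R * ((1 + E) * (1 + E + K)) + eps * N%:R * (1 + E)) by ring.
  by rewrite eps_N -mulrDr /straightening_const addrA.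
Qed.
End Straightening.

Theorem lemma4p3 (R : realType) (E kappa K : R) :
  1 < kappa - E ->
  exists (Kc : R) (N0 : nat),
  forall (N : nat) (H : 'rV[R]_N -> 'rV[R]_N),
    (N0 <= N)%N ->
    H1 E kappa H -> H2 E K H ->
    forall (i : 'I_N) (Phi : 'rV[R]_N -> 'rV[R]_N),
      is_Phi H i Phi ->
      forall x : 'rV[R]_N,
        dC2_le (fun t => cmpt H i (Phi (setc x i t)))
               (fun t => cmpt H i (setc x i t))
               (Kc / N%:R).
Proof.
move=> kappa_gt; exists (E * straightening_const E K), 3%N.
move=> N H N_ge3 hH1 hH2 i Phi hPhi x.
exact: dC2_Gx_Hx kappa_gt N_ge3 hH1 hH2 hPhi.
Qed.
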